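(* Let $\{e_j\}_{j\in\mathbb N}$ be a complete orthonormal system in $L$, $L_0:=\operatorname{span}\{e_j: j\in\mathbb N\}$ (finite linear combinations), and let $B:L_0\to L$ be a linear operator. Put $d\Gamma_M(B):=\sum_{j=1}^M a^\dagger(Be_j)a(\bar e_j)$. If the operators $d\Gamma_M(B)$ converge strongly on all of $\mathcal F^{(1)}$ as $M\to\infty$, then $B$ is bounded on $L_0$, i.e. $\sup\{\|Bf\|: f\in L_0,\ \|f\|=1\}<\infty$.
   Context: $L$ is a separable complex Hilbert space with $\dim L=\infty$, scalar product antilinear in the first argument, and a conjugation $f\mapsto\bar f$ (antilinear involution with $(\bar f,\bar g)=(g,f)$). $\mathcal F$ carries a Fock representation of the CCR over $L$: on a dense invariant domain $D$ there are operators $a(f),a^\dagger(f)$, linear in $f$, with $[a(f),a(g)]=0=[a^\dagger(f),a^\dagger(g)]$, $[a(f),a^\dagger(g)]=(\bar f,g)\mathrm{id}$, $(a(f)\Phi,\Psi)=(\Phi,a^\dagger(\bar f)\Psi)$, a unit vacuum $\Omega$ with $a(f)\Omega=0$, and $\mathcal F$ is the closure of the span of all vectors $a^\dagger(f_n)\cdots a^\dagger(f_1)\Omega$. $\mathcal F^{(1)}$ is the closure of $\{a^\dagger(f)\Omega: f\in L\}$; $a(f),a^\dagger(f)$ extend to bounded operators from the closed $n$-particle space to the $(n\mp1)$-particle space, which are used. *)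

From HB Require Import structures.
From mathcomp Require Import all_boot all_order all_algebra.
From mathcomp Require Import reals.
From mathcomp Require Import complex.
Set Implicit Arguments. Unset Strict Implicit. Unset Printing Implicit Defensive.
Import Order.TTheory GRing.Theory Num.Theory.
Local Open Scope ring_scope.

Section Hilbert.
Variable R : realType.
Local Notation C := R[i].
Variable V : lmodType C.
Variable ip : V -> V -> C.   (* scalar product, antilinear in first argument *)

Definition is_scalar_product : Prop :=
  [/\ (forall x y1 y2 (c : C), ip x (c *: y1 + y2) = c * ip x y1 + ip x y2),
      (forall x y, ip y x = (ip x y)^*),
      (forall x, 0 <= ip x x) &
      (forall x, ip x x = 0 -> x = 0)].

Definition hnorm (x : V) : R := Num.sqrt (complex.Re (ip x x)).

Definition hcvg (u : nat -> V) (l : V) : Prop :=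
  forall eps : R, 0 < eps -> exists N : nat, forall n, (N <= n)%N ->
    hnorm (u n - l) < eps.

Definition hcauchy (u : nat -> V) : Prop :=
  forall eps : R, 0 < eps -> exists N : nat, forall n m, (N <= n)%N -> (N <= m)%N ->
    hnorm (u n - u m) < eps.

Definition is_hilbert : Prop :=
  is_scalar_product /\ forall u, hcauchy u -> exists l, hcvg u l.

Definition separable : Prop :=
  exists s : nat -> V, forall x (eps : R), 0 < eps -> exists n, hnorm (x - s n) < eps.

Definition in_span (P : V -> Prop) (x : V) : Prop :=
  exists (n : nat) (c : 'I_n -> C) (v : 'I_n -> V),
    (forall i, P (v i)) /\ x = \sum_(i < n) c i *: v i.

Definition in_closure (P : V -> Prop) (x : V) : Prop :=
  forall eps : R, 0 < eps -> exists y, P y /\ hnorm (x - y) < eps.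

Definition complete_orthonormal (e : nat -> V) : Prop :=
  (forall i j, ip (e i) (e j) = (i == j)%:R) /\
  (forall x, (forall j, ip (e j) x = 0) -> x = 0).

Definition is_conjugation (cj : V -> V) : Prop :=
  [/\ (forall (c : C) f g, cj (c *: f + g) = c^* *: cj f + cj g),
      (forall f, cj (cj f) = f) &
      (forall f g, ip (cj f) (cj g) = ip g f)].
End Hilbert.

Section Fock.
Variable R : realType.
Local Notation C := R[i].
Variables (L : lmodType C) (ipL : L -> L -> C) (cj : L -> L).
Variables (F : lmodType C) (ipF : F -> F -> C).
Variables (D : F -> Prop) (a ad : L -> F -> F) (Om : F).

(* a^dagger(f_n) ... a^dagger(f_1) Omega for s = [:: f_n; ...; f_1] *)
Definition fvec (s : seq L) : F := foldr ad Om s.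

Definition npart (n : nat) (x : F) : Prop :=
  in_closure ipF (in_span (fun y => exists s, size s = n /\ y = fvec s)) x.

Definition bounded_linear_on (P : F -> Prop) (T : F -> F) : Prop :=
  (forall (c : C) x y, P x -> P y -> T (c *: x + y) = c *: T x + T y) /\
  exists K : R, forall x, P x -> hnorm ipF (T x) <= K * hnorm ipF x.

Definition fock_representation : Prop :=
  (forall (c : C) x y, D x -> D y -> D (c *: x + y)) /\
  D Om /\
  (forall f x, D x -> D (a f x) /\ D (ad f x)) /\
  (forall x, in_closure ipF D x) /\
  (forall f (c : C) x y, D x -> D y ->
      a f (c *: x + y) = c *: a f x + a f y /\
      ad f (c *: x + y) = c *: ad f x + ad f y) /\
  (forall (c : C) f g x, D x ->
      a (c *: f + g) x = c *: a f x + a g x /\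
      ad (c *: f + g) x = c *: ad f x + ad g x) /\
  (forall f g x, D x ->
      a f (a g x) = a g (a f x) /\ ad f (ad g x) = ad g (ad f x) /\
      a f (ad g x) - ad g (a f x) = ipL (cj f) g *: x) /\
  (forall f x y, D x -> D y -> ipF (a f x) y = ipF x (ad (cj f) y)) /\
  ipF Om Om = 1 /\
  (forall f, a f Om = 0) /\
  (forall x, in_closure ipF (in_span (fun y => exists s, y = fvec s)) x) /\
  (forall f n,
     (forall x, npart n.+1 x -> npart n (a f x)) /\
     (forall x, npart n x -> npart n.+1 (ad f x)) /\
     bounded_linear_on (npart n) (a f) /\
     bounded_linear_on (npart n) (ad f)).

(* dGamma_M(B) = sum_{j=1}^M a^dagger(B e_j) a(conj e_j), indices shifted to 0..M-1 *)
Definition dGammaM (e : nat -> L) (B : L -> L) (M : nat) (x : F) : F :=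
  \sum_(j < M) ad (B (e j)) (a (cj (e j)) x).
End Fock.

Definition inL0 (R : realType) (L : lmodType R[i]) (e : nat -> L) (f : L) : Prop :=
  exists (n : nat) (c : 'I_n -> R[i]), f = \sum_(j < n) c j *: e j.

(* B : L0 -> L linear (B is given as a function on L; only values on L0 matter) *)
Definition linear_on_L0 (R : realType) (L : lmodType R[i]) (e : nat -> L) (B : L -> L) : Prop :=
  forall (c : R[i]) f g, inL0 e f -> inL0 e g -> B (c *: f + g) = c *: B f + B g.

From mathcomp Require Import all_boot all_order all_algebra.
From mathcomp Require Import reals.
From mathcomp Require Import complex.
From mathcomp Require Import ring lra.
From Stdlib Require Import Classical_Prop ClassicalEpsilon.
(* On the one-particle space, dGamma_M(B) a^dagger(f) Omega = a^dagger(B P_M f) Omega,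
   where P_M is the orthogonal projection onto span{e_j : j < M}, and f |-> a^dagger(f) Omega
   is isometric (by the CCR and a(f) Omega = 0).  Strong convergence on F^(1) therefore makes
   (B (P_M f))_M a Cauchy sequence for every f in L.  If B were unbounded on L0, a gliding hump
   would give vectors g_k of L0 with disjoint supports [M_k, M_(k+1)), ||g_k|| <= 2^-k and
   ||B g_k|| > 1; by completeness f := sum_k g_k exists, P_(M_k) f = g_0 + ... + g_(k-1), and
   B (P_(M_(k+1)) f) - B (P_(M_k) f) = B g_k contradicts the Cauchy property. *)

Set Implicit Arguments. Unset Strict Implicit. Unset Printing Implicit Defensive.
Import Order.TTheory GRing.Theory Num.Theory.
Local Open Scope ring_scope.

Section ScalarProduct.
Variable R : realType.
Variable V : lmodType R[i].
Variable ip : V -> V -> R[i].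
Hypothesis ipP : is_scalar_product ip.
Local Notation hn := (hnorm ip).
Local Notation "r %:C" := (real_complex R r).

Lemma ipC x y : ip y x = (ip x y)^*.
Proof. by case: ipP. Qed.

Lemma ip_ge0 x : 0 <= ip x x.
Proof. by case: ipP. Qed.

Lemma ipDr x y z : ip x (y + z) = ip x y + ip x z.
Proof. by case: ipP => lin _ _ _; rewrite -[y]scale1r lin mul1r scale1r. Qed.

Lemma ip0r x : ip x 0 = 0.
Proof. by apply: (addrI (ip x 0)); rewrite -ipDr !addr0. Qed.

Lemma ipZr x c y : ip x (c *: y) = c * ip x y.
Proof. by case: ipP => lin _ _ _; rewrite -[c *: y]addr0 lin ip0r addr0. Qed.

Lemma ipBr x y z : ip x (y - z) = ip x y - ip x z.
Proof. by rewrite ipDr -scaleN1r ipZr mulN1r. Qed.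

Lemma ip0l x : ip 0 x = 0.
Proof. by rewrite ipC ip0r conjC0. Qed.

Lemma ipDl x y z : ip (y + z) x = ip y x + ip z x.
Proof. by rewrite [LHS]ipC ipDr rmorphD [ip y x]ipC [ip z x]ipC. Qed.

Lemma ipZl x c y : ip (c *: y) x = c^* * ip y x.
Proof. by rewrite [LHS]ipC ipZr rmorphM [ip y x]ipC. Qed.

Lemma ipBl x y z : ip (y - z) x = ip y x - ip z x.
Proof. by rewrite [LHS]ipC ipBr rmorphB [ip y x]ipC [ip z x]ipC. Qed.

Lemma ip_sumr x n (f : 'I_n -> V) : ip x (\sum_(i < n) f i) = \sum_(i < n) ip x (f i).
Proof. by elim/big_rec2: _ => [|i u v _ <-]; rewrite ?ip0r ?ipDr. Qed.

Lemma ip_suml x n (f : 'I_n -> V) : ip (\sum_(i < n) f i) x = \sum_(i < n) ip (f i) x.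
Proof. by elim/big_rec2: _ => [|i u v _ <-]; rewrite ?ip0l ?ipDl. Qed.

Lemma hnorm_ge0 x : 0 <= hn x.
Proof. exact: sqrtr_ge0. Qed.

Lemma hnormE x : (hn x)%:C ^+ 2 = ip x x.
Proof.
have := ip_ge0 x; rewrite lecE /= => /andP[/eqP Im0 Re_ge0].
by rewrite -rmorphXn sqr_sqrtr //; case: (ip x x) Im0 => u v /= ->.
Qed.

Lemma hnorm0 : hn 0 = 0.
Proof. by rewrite /hnorm ip0r sqrtr0. Qed.

Lemma hnorm_le x y : (hn x <= hn y) = (ip x x <= ip y y).
Proof. by rewrite -!hnormE ler_sqr ?nnegrE ?ler0c ?hnorm_ge0 ?lecR. Qed.

Lemma hnorm_le_orthD x y : ip x y = 0 -> hn y <= hn (x + y).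
Proof.
move=> xy0; rewrite hnorm_le !ipDl !ipDr xy0 [ip y x]ipC xy0 conjC0.
by rewrite addr0 add0r lerDr ip_ge0.
Qed.

Lemma normC_ip_le x y : `|ip x y| <= (hn x * hn y)%:C.
Proof.
rewrite -(ler_pXn2r (_ : 0 < 2)%N) ?nnegrE ?normr_ge0 ?ler0c ?mulr_ge0 ?hnorm_ge0 //.
rewrite rmorphM exprMn !hnormE.
have [->|x_neq0] := eqVneq x 0; first by rewrite !ip0l normr0 expr0n mul0r.
have ipxx_gt0 : 0 < ip x x.
  by rewrite lt_def ip_ge0 andbT; apply: contra x_neq0 => /eqP ipxx0; case: ipP => _ _ _ /(_ x ipxx0) ->.
have := ip_ge0 (ip x x *: y - ip x y *: x).
rewrite ipBl !ipBr !ipZl !ipZr [ip y x]ipC (conj_Creal (ger0_real (ip_ge0 x))).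
set p := ip x y; set a := ip x x.
have -> : a * (a * ip y y) - a * (p * p^*) - (p^* * (a * p) - p^* * (p * a))
          = a * (a * ip y y - p * p^*) by ring.
by rewrite pmulr_rge0 // subr_ge0 normCK.
Qed.

Lemma hnormD_le x y : hn (x + y) <= hn x + hn y.
Proof.
rewrite -(ler_pXn2r (_ : 0 < 2)%N) ?nnegrE ?addr_ge0 ?hnorm_ge0 //.
rewrite -lecR !rmorphXn rmorphD hnormE sqrrD !hnormE ipDl !ipDr [ip y x]ipC.
set p := ip x y.
have -> : ip x x + p + (p^* + ip y y) = ip x x + (p + p^*) + ip y y by ring.
rewrite lerD2r lerD2l.
have p_real : p + p^* \is Num.real.
  by apply/CrealP; rewrite rmorphD addrC; congr (_ + _); apply: conjCK.
apply: le_trans (real_ler_norm p_real) _.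
by rewrite (le_trans (ler_normD _ _)) // norm_conjC -rmorphM mulr2n lerD ?normC_ip_le.
Qed.

Lemma hnormZ c x : (hn (c *: x))%:C = `|c| * (hn x)%:C.
Proof.
apply: (pexpIrn (_ : 0 < 2)%N); rewrite ?nnegrE ?mulr_ge0 ?normr_ge0 ?ler0c ?hnorm_ge0 //.
by rewrite exprMn normCK !hnormE ipZl ipZr mulrA [c^* * c]mulrC.
Qed.

Lemma hnormZr (r : R) x : 0 <= r -> hn (r%:C *: x) = r * hn x.
Proof. by move=> r_ge0; apply: complexI; rewrite hnormZ rmorphM ger0_norm ?ler0c. Qed.

Lemma hnormZ_le c x : `|c| <= 1 -> hn (c *: x) <= hn x.
Proof. by move=> c_le1; rewrite -lecR hnormZ ler_piMl ?ler0c ?hnorm_ge0. Qed.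

Lemma hdistC x y : hn (x - y) = hn (y - x).
Proof.
have -> : x - y = (-1) *: (y - x) by rewrite scaleN1r opprB.
by apply: complexI; rewrite hnormZ normrN normr1 mul1r.
Qed.

Lemma hnorm_sum_le n (f : 'I_n -> V) : hn (\sum_(i < n) f i) <= \sum_(i < n) hn (f i).
Proof.
elim/big_rec2: _ => [|i u v _ IH]; first by rewrite hnorm0.
by apply: le_trans (hnormD_le _ _) _; rewrite lerD2l.
Qed.

Lemma hcvg_hcauchy u l : hcvg ip u l -> hcauchy ip u.
Proof.
move=> ul eps eps_gt0; have [N HN] := ul _ (divr_gt0 eps_gt0 (ltr0n R 2)).
exists N => n m nN mN; have := HN n nN; have := HN m mN.
have := hnormD_le (u n - l) (l - u m); rewrite addrA subrK (hdistC l) => tri.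
lra.
Qed.

Lemma hcvg_ip_eventually u l x k c :
  hcvg ip u l -> (forall n, (k <= n)%N -> ip x (u n) = c) -> ip x l = c.
Proof.
move=> ul uc; apply/eqP; rewrite -subr_eq0; apply: contraT => z_neq0.
set z := _ - _ in z_neq0.
have z_real : (complex.Re `|z|)%:C = `|z| by apply: RRe_real; exact: normr_real.
have r_gt0 : 0 < complex.Re `|z| by rewrite -ltcR z_real [X in X < _]rmorph0 normr_gt0.
set r := complex.Re _ in z_real r_gt0.
pose eps := r / (hn x + 1).
have hx1_gt0 : 0 < hn x + 1 by rewrite ltr_wpDl ?hnorm_ge0.
have eps_gt0 : 0 < eps by rewrite divr_gt0.
have r_eq : r = hn x * eps + eps by rewrite -{2}[eps]mul1r -mulrDl mulrC mulfVK ?gt_eqF.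
have [N HN] := ul _ eps_gt0; pose n := maxn N k.
have zE : z = ip x (l - u n) by rewrite ipBr uc ?leq_maxr.
have := normC_ip_le x (l - u n); rewrite -zE -z_real lecR hdistC => z_le.
have := HN n (leq_maxl _ _) => un_lt.
have := ler_wpM2l (hnorm_ge0 x) (ltW un_lt); lra.
Qed.

End ScalarProduct.

Definition halfpow (R : realType) (k : nat) : R := (2 ^+ k)^-1.

Section Geometric.
Variable R : realType.
Local Notation halfpow := (@halfpow R).

Lemma halfpow_gt0 k : 0 < halfpow k.
Proof. by rewrite invr_gt0 exprn_gt0. Qed.

Lemma halfpowS k : halfpow k = 2 * halfpow k.+1.
Proof. by rewrite /halfpow exprS invfM mulrA mulfV ?mul1r ?pnatr_eq0. Qed.

Lemma halfpow_lt eps : 0 < eps -> exists k, halfpow k < eps.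
Proof.
move=> eps_gt0; exists (Num.bound eps^-1).
by rewrite /halfpow invf_plt ?posrE ?exprn_gt0 // upper_nthrootP.
Qed.

Variable V : lmodType R[i].
Variable ip : V -> V -> R[i].
Hypothesis ipP : is_scalar_product ip.
Local Notation hn := (hnorm ip).

Lemma hcauchy_geometric u :
  (forall k, hn (u k.+1 - u k) <= halfpow k) -> hcauchy ip u.
Proof.
move=> u_step.
have tail k n : (k <= n)%N -> hn (u n - u k) <= 2 * halfpow k.
  move=> /subnKC <-; set t := (n - k)%N.
  suff : hn (u (k + t)%N - u k) <= 2 * halfpow k - 2 * halfpow (k + t)%N.
    by have := halfpow_gt0 (k + t); lra.
  elim: t => [|t IH]; first by rewrite !addn0 !subrr (hnorm0 ipP).
  have := hnormD_le ipP (u (k + t).+1 - u (k + t)%N) (u (k + t)%N - u k).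
  rewrite addrA subrK addnS => tri.
  have := u_step (k + t)%N; have := halfpowS (k + t); lra.
move=> eps eps_gt0; have [k k_lt] := halfpow_lt (divr_gt0 eps_gt0 (ltr0n R 4)).
exists k => n m kn km; have := tail _ _ kn; have := tail _ _ km.
have := hnormD_le ipP (u n - u k) (u k - u m).
rewrite addrA subrK (hdistC ipP (u k)); lra.
Qed.

End Geometric.

Section Orthonormal.
Variable R : realType.
Variable V : lmodType R[i].
Variable ip : V -> V -> R[i].
Hypothesis ipP : is_scalar_product ip.
Variable e : nat -> V.
Hypothesis e_orthonormal : forall i j, ip (e i) (e j) = (i == j)%:R.
Local Notation hn := (hnorm ip).

Definition eproj (N : nat) (x : V) : V := \sum_(j < N) ip (e j) x *: e j.

Lemma ip_eproj j N x : ip (e j) (eproj N x) = if (j < N)%N then ip (e j) x else 0.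
Proof.
elim: N => [|N IH]; first by rewrite /eproj big_ord0 (ip0r ipP).
rewrite /eproj big_ord_recr /= (ipDr ipP) -/(eproj N x) IH (ipZr ipP) e_orthonormal ltnS.
by case: (ltngtP j N) => [_|_|->]; rewrite ?eqxx ?mulr1 ?mulr0 ?addr0 ?add0r.
Qed.

Lemma eprojD N x y : eproj N (x + y) = eproj N x + eproj N y.
Proof. by rewrite -big_split; apply: eq_bigr => j _; rewrite (ipDr ipP) scalerDl. Qed.

Lemma eprojZ N c x : eproj N (c *: x) = c *: eproj N x.
Proof. by rewrite scaler_sumr; apply: eq_bigr => j _; rewrite (ipZr ipP) scalerA. Qed.

Lemma eproj_ext N M y :
  (forall j, (N <= j)%N -> ip (e j) y = 0) -> (N <= M)%N -> eproj M y = eproj N y.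
Proof.
move=> y_tail; elim: M => [|M IH]; first by rewrite leqn0 => /eqP->.
rewrite leq_eqVlt => /orP[/eqP<-//|]; rewrite ltnS => NM.
by rewrite /eproj big_ord_recr /= y_tail // scale0r addr0 -/(eproj M y) IH.
Qed.

Lemma eproj_id N M y : eproj N y = y -> (N <= M)%N -> eproj M y = y.
Proof.
move=> yN NM; rewrite (@eproj_ext N) // => j Nj.
by rewrite -yN ip_eproj ltnNge Nj.
Qed.

Lemma eprojK N M x : (N <= M)%N -> eproj M (eproj N x) = eproj N x.
Proof.
apply: eproj_id; apply: eq_bigr => j _.
by rewrite ip_eproj ltn_ord.
Qed.

Lemma inL0P x : inL0 e x <-> exists N, eproj N x = x.
Proof.
split=> [[n [c ->]]|[N xN]]; last by exists N, (fun j : 'I_N => ip (e j) x).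
exists n; apply: eq_bigr => j _; congr (_ *: _).
rewrite (ip_sumr ipP) (bigD1 j) //= (ipZr ipP) e_orthonormal eqxx mulr1 big1 ?addr0 // => i ij.
by rewrite (ipZr ipP) e_orthonormal eq_sym (negbTE (ij : (i : nat) != j)) mulr0.
Qed.

Lemma inL0_eproj N x : inL0 e (eproj N x).
Proof. by apply/inL0P; exists N; apply: eprojK. Qed.

Lemma inL0_0 : inL0 e 0.
Proof. by exists 0%N, (fun _ => 0); rewrite big_ord0. Qed.

Lemma inL0_lin c x y : inL0 e x -> inL0 e y -> inL0 e (c *: x + y).
Proof.
move=> /inL0P [N xN] /inL0P [M yM]; apply/inL0P; exists (maxn N M).
by rewrite eprojD eprojZ (eproj_id xN) ?leq_maxl // (eproj_id yM) ?leq_maxr.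
Qed.

Lemma inL0Z c x : inL0 e x -> inL0 e (c *: x).
Proof. by move=> x0; rewrite -[c *: x]addr0; apply: inL0_lin x0 inL0_0. Qed.

Lemma inL0_e j : inL0 e (e j).
Proof.
exists j.+1, (fun i => (i == j :> nat)%:R).
by rewrite big_ord_recr /= eqxx scale1r big1 ?add0r // => i _; rewrite ltn_eqF ?scale0r.
Qed.

Lemma hnorm_e j : hn (e j) = 1.
Proof. by rewrite /hnorm e_orthonormal eqxx sqrtr1. Qed.

Lemma hnorm_sub_eproj_le N x : hn (x - eproj N x) <= hn x.
Proof.
have orth : ip (eproj N x) (x - eproj N x) = 0.
  rewrite (ip_suml ipP) big1 // => j _.
  by rewrite (ipZl ipP) (ipBr ipP) ip_eproj ltn_ord subrr mulr0.
by have := hnorm_le_orthD ipP orth; rewrite [eproj N x + _]addrC subrK.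
Qed.

End Orthonormal.

Section LinearOnL0.
Variable R : realType.
Variable V : lmodType R[i].
Variable ip : V -> V -> R[i].
Hypothesis ipP : is_scalar_product ip.
Variable e : nat -> V.
Hypothesis e_orthonormal : forall i j, ip (e i) (e j) = (i == j)%:R.
Variable B : V -> V.
Hypothesis B_linear : linear_on_L0 e B.
Local Notation hn := (hnorm ip).
Local Notation eproj := (eproj ip e).
Local Notation inL0_0 := (inL0_0 e).
Local Notation inL0_e := (inL0_e e).
Local Notation inL0Z := (inL0Z ipP e_orthonormal).
Local Notation inL0_lin := (inL0_lin ipP e_orthonormal).
Local Notation ip_eproj := (ip_eproj ipP e_orthonormal).
Local Notation inL0_eproj := (inL0_eproj ipP e_orthonormal).

Lemma linL0_0 : B 0 = 0.
Proof.
have := B_linear (-1) inL0_0 inL0_0.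
by rewrite scaler0 addr0 scaleN1r => {1}->; rewrite addNr.
Qed.

Lemma linL0D x y : inL0 e x -> inL0 e y -> B (x + y) = B x + B y.
Proof. by move=> x0 y0; rewrite -[x in LHS]scale1r B_linear // scale1r. Qed.

Lemma linL0Z c x : inL0 e x -> B (c *: x) = c *: B x.
Proof. by move=> x0; rewrite -[c *: x]addr0 (B_linear _ x0 inL0_0) linL0_0 !addr0. Qed.

Lemma linL0_eproj N x : B (eproj N x) = \sum_(j < N) ip (e j) x *: B (e j).
Proof.
elim: N => [|N IH]; first by rewrite /eproj !big_ord0 linL0_0.
have eN0 := inL0Z (ip (e N) x) (inL0_e N).
rewrite /eproj big_ord_recr /= (linL0D (inL0_eproj N x) eN0) (linL0Z _ (inL0_e N)) IH.
by rewrite big_ord_recr.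
Qed.

Lemma hnorm_linL0_eproj_le N x :
  hn x <= 1 -> hn (B (eproj N x)) <= \sum_(j < N) hn (B (e j)).
Proof.
move=> x_le1; rewrite linL0_eproj; apply: le_trans (hnorm_sum_le ipP _) _.
apply: ler_sum => j _; apply: hnormZ_le => //.
apply: le_trans (normC_ip_le ipP _ _) _.
by rewrite (hnorm_e e_orthonormal) mul1r; rewrite -(lecR _ 1) in x_le1.
Qed.

(* Strip the first N coordinates from a unit vector f with
   ||B f|| > sum_(j<N) ||B e_j|| + 1/d, then rescale by d. *)
Lemma unbounded_hump
    (unbounded : forall K : R, exists2 f, inL0 e f & hn f = 1 /\ K < hn (B f))
    N (d : R) : 0 < d ->
  exists2 g, inL0 e g &
    [/\ forall j, (j < N)%N -> ip (e j) g = 0, hn g <= d & 1 < hn (B g)].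
Proof.
move=> d_gt0; set Q := \sum_(j < N) hn (B (e j)).
have [f f0 [f1 Bf_big]] := unbounded (Q + d^-1).
set h := f - eproj N f.
have h0 : inL0 e h by rewrite /h addrC -scaleN1r; apply: inL0_lin (inL0_eproj N f) f0.
have h_orth j : (j < N)%N -> ip (e j) h = 0.
  by move=> jN; rewrite (ipBr ipP) ip_eproj jN subrr.
have h_le1 : hn h <= 1 by rewrite -f1 (hnorm_sub_eproj_le ipP e_orthonormal).
have Bh_big : d^-1 < hn (B h).
  have Bf : B f = B (eproj N f) + B h.
    by rewrite -(linL0D (inL0_eproj N f) h0) /h addrCA subrr addr0.
  have := hnormD_le ipP (B (eproj N f)) (B h); rewrite -Bf.
  have f_le1 : hn f <= 1 by rewrite f1.
  have := hnorm_linL0_eproj_le N f_le1; rewrite -/Q; lra.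
exists ((real_complex R d) *: h); first exact: inL0Z.
split.
- by move=> j jN; rewrite (ipZr ipP) h_orth ?mulr0.
- by rewrite (hnormZr ipP _ (ltW d_gt0)) ger_pMr.
- by rewrite linL0Z // (hnormZr ipP _ (ltW d_gt0)) -(mulfV (lt0r_neq0 d_gt0)) ltr_pM2l.
Qed.

End LinearOnL0.

Section GlidingHump.
Variable R : realType.
Variable V : lmodType R[i].
Variable ip : V -> V -> R[i].
Hypothesis ipP : is_scalar_product ip.
Hypothesis V_complete : forall u, hcauchy ip u -> exists l, hcvg ip u l.
Variable e : nat -> V.
Hypothesis e_orthonormal : forall i j, ip (e i) (e j) = (i == j)%:R.
Local Notation hn := (hnorm ip).
Local Notation eproj := (eproj ip e).

Lemma block_series_eproj (cut : nat -> nat) (g : nat -> V) :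
    (forall k, cut k <= cut k.+1)%N ->
    (forall k, eproj (cut k.+1) (g k) = g k) ->
    (forall k j, (j < cut k)%N -> ip (e j) (g k) = 0) ->
    (forall k, hn (g k) <= halfpow R k) ->
  exists f, forall k, eproj (cut k) f = \sum_(i < k) g i.
Proof.
move=> cut_le g_supp g_orth g_small; pose G k := \sum_(i < k) g i.
have cut_mono : {homo cut : m n / m <= n}%N := homo_leq leqnn leq_trans cut_le.
have GS k : G k.+1 = G k + g k by rewrite /G big_ord_recr.
have G_supp k : eproj (cut k) (G k) = G k.
  elim: k => [|k IH].
    by rewrite /G big_ord0 /eproj big1 // => j _; rewrite (ip0r ipP) scale0r.
  by rewrite GS (eprojD ipP) (eproj_id ipP e_orthonormal IH (cut_le k)) g_supp.
have G_coef k m j : (k <= m)%N -> (j < cut k)%N -> ip (e j) (G m) = ip (e j) (G k).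
  move=> /subnKC <- jk; elim: (m - k)%N => [|t IH]; first by rewrite addn0.
  rewrite addnS GS (ipDr ipP) IH g_orth ?addr0 //.
  exact: leq_trans jk (cut_mono _ _ (leq_addr _ _)).
have [f Gf] : exists f, hcvg ip G f.
  apply/V_complete/(hcauchy_geometric ipP) => k.
  by rewrite GS addrAC subrr add0r; exact: g_small.
exists f => k; rewrite -/(G k) -[RHS]G_supp; apply: eq_bigr => j _; congr (_ *: _).
by apply: (hcvg_ip_eventually (k := k) ipP Gf) => m km; apply: G_coef km (ltn_ord j).
Qed.

Variable B : V -> V.
Hypothesis B_linear : linear_on_L0 e B.

Lemma bounded_of_cauchy_eproj :
    (forall f, hcauchy ip (fun n => B (eproj n f))) ->
  exists K, forall f, inL0 e f -> hn f = 1 -> hn (B f) <= K.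
Proof.
move=> B_cauchy; apply: NNPP => not_bounded.
have unbounded K : exists2 f, inL0 e f & hn f = 1 /\ K < hn (B f).
  apply: NNPP => bounded_K; apply: not_bounded; exists K => f f0 f1.
  by rewrite leNgt; apply/negP => Kf; apply: bounded_K; exists f.
have hump N k : exists p : nat * V,
    [/\ (N < p.1)%N, eproj p.1 p.2 = p.2, forall j, (j < N)%N -> ip (e j) p.2 = 0,
        hn p.2 <= halfpow R k & 1 < hn (B p.2)].
  have [g /(inL0P ipP e_orthonormal) [n gn] [g_orth g_small g_big]] :=
    unbounded_hump ipP e_orthonormal B_linear unbounded N (halfpow_gt0 R k).
  exists (maxn n N.+1, g); split => //=; first exact: leq_maxr.
  by rewrite (eproj_id ipP e_orthonormal gn) ?leq_maxl.
pose pick N k := sval (constructive_indefinite_description _ (hump N k)).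
pose cut := fix cut k := if k is k'.+1 then (pick (cut k') k').1 else 0%N.
pose g k := (pick (cut k) k).2.
have cutP k : [/\ (cut k < cut k.+1)%N, eproj (cut k.+1) (g k) = g k,
    forall j, (j < cut k)%N -> ip (e j) (g k) = 0, hn (g k) <= halfpow R k
    & 1 < hn (B (g k))].
  exact: svalP (constructive_indefinite_description _ (hump (cut k) k)).
have [f fE] : exists f, forall k, eproj (cut k) f = \sum_(i < k) g i.
  by apply: block_series_eproj => k; case: (cutP k) => // /ltnW.
have cut_ge k : (k <= cut k)%N.
  by elim: k => // k IH; case: (cutP k) => /(leq_ltn_trans IH).
have [N N_cauchy] := B_cauchy f 1 ltr01.
have [cut_lt _ _ _ g_big] := cutP N.
have fS : eproj (cut N.+1) f = eproj (cut N) f + g N by rewrite !fE big_ord_recr.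
have := N_cauchy _ _ (leq_trans (cut_ge N) (ltnW cut_lt)) (cut_ge N).
rewrite fS (linL0D B_linear (inL0_eproj ipP e_orthonormal _ _)); last first.
  by apply/(inL0P ipP e_orthonormal); exists (cut N.+1); case: (cutP N).
by rewrite addrAC subrr add0r => /(lt_trans g_big); rewrite ltxx.
Qed.

End GlidingHump.

Section OneParticle.
Variable R : realType.
Variables (L : lmodType R[i]) (ipL : L -> L -> R[i]) (cj : L -> L).
Variables (F : lmodType R[i]) (ipF : F -> F -> R[i]).
Variables (D : F -> Prop) (a ad : L -> F -> F) (Om : F).
Hypothesis ipLP : is_scalar_product ipL.
Hypothesis ipFP : is_scalar_product ipF.
Hypothesis cjK : forall f, cj (cj f) = f.
Hypothesis fockP : fock_representation ipL cj ipF D a ad Om.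

Lemma ad_vacD c f g : ad (c *: f + g) Om = c *: ad f Om + ad g Om.
Proof.
have [_ [DOm [_ [_ [_ [ad_lin _]]]]]] := fockP.
by have [] := ad_lin c f g Om DOm.
Qed.

Lemma ad_vacB f g : ad (f - g) Om = ad f Om - ad g Om.
Proof. by rewrite addrC -scaleN1r ad_vacD scaleN1r addrC. Qed.

Lemma ad_vac0 : ad 0 Om = 0.
Proof. by rewrite -(subrr 0) ad_vacB subrr. Qed.

Lemma ad_vac_sum n (c : 'I_n -> R[i]) (f : 'I_n -> L) :
  ad (\sum_(i < n) c i *: f i) Om = \sum_(i < n) c i *: ad (f i) Om.
Proof.
elim/big_rec2: _ => [|i u v _ IH]; first exact: ad_vac0.
by rewrite ad_vacD IH.
Qed.

Lemma ad_vec0 f : ad f 0 = 0.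
Proof.
have [_ [DOm [_ [_ [ad_lin _]]]]] := fockP.
case: (ad_lin f (-1) Om Om DOm DOm) => _.
by rewrite scaleN1r !addNr => ->; rewrite scaleN1r addNr.
Qed.

Lemma adZ_vac f c : ad f (c *: Om) = c *: ad f Om.
Proof.
have [D_lin [DOm [_ [_ [ad_lin _]]]]] := fockP.
have D0 : D 0 by have := D_lin (-1) Om Om DOm DOm; rewrite scaleN1r addNr.
by case: (ad_lin f c Om 0 DOm D0) => _; rewrite !addr0 ad_vec0 addr0.
Qed.

Lemma a_ad_vac f g : a (cj f) (ad g Om) = ipL f g *: Om.
Proof.
have [_ [DOm [_ [_ [_ [_ [ccr [_ [_ [aOm _]]]]]]]]]] := fockP.
case: (ccr (cj f) g Om DOm) => _ [_].
by rewrite aOm ad_vec0 subr0 cjK.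
Qed.

Lemma hnorm_ad_vac f : hnorm ipF (ad f Om) = hnorm ipL f.
Proof.
have [_ [DOm [Dinv [_ [_ [_ [_ [adj [OmOm _]]]]]]]]] := fockP.
rewrite /hnorm; congr (Num.sqrt (complex.Re _)).
have := adj (cj f) _ _ (proj2 (Dinv f Om DOm)) DOm; rewrite cjK => <-.
rewrite a_ad_vac (ipZl ipFP) OmOm mulr1.
exact: conj_Creal (ger0_real (ip_ge0 ipLP f)).
Qed.

Lemma npart1_ad_vac f : npart ipF ad Om 1 (ad f Om).
Proof.
move=> eps eps_gt0; exists (ad f Om); split; last by rewrite subrr (hnorm0 ipFP).
exists 1%N, (fun _ => 1), (fun _ => ad f Om); split; first by exists [:: f].
by rewrite big_ord1 scale1r.
Qed.

Variables (e : nat -> L) (B : L -> L).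
Hypothesis e_orthonormal : forall i j, ipL (e i) (e j) = (i == j)%:R.
Hypothesis B_linear : linear_on_L0 e B.

Lemma dGammaM_ad_vac M f :
  dGammaM cj a ad e B M (ad f Om) = ad (B (eproj ipL e M f)) Om.
Proof.
rewrite (linL0_eproj ipLP e_orthonormal B_linear) ad_vac_sum.
by apply: eq_bigr => j _; rewrite a_ad_vac adZ_vac.
Qed.

Lemma hcauchy_dGammaM_ad_vac f :
  (exists y, hcvg ipF (fun M => dGammaM cj a ad e B M (ad f Om)) y) ->
  hcauchy ipL (fun M => B (eproj ipL e M f)).
Proof.
move=> [y /(hcvg_hcauchy ipFP) dG_cauchy] eps /dG_cauchy [N HN].
exists N => n m nN mN; have := HN n m nN mN.
by rewrite /= !dGammaM_ad_vac -ad_vacB hnorm_ad_vac.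
Qed.

End OneParticle.

Theorem proposition5p4 (R : realType)
  (L : lmodType R[i]) (ipL : L -> L -> R[i]) (cj : L -> L)
  (F : lmodType R[i]) (ipF : F -> F -> R[i])
  (D : F -> Prop) (a ad : L -> F -> F) (Om : F)
  (e : nat -> L) (B : L -> L) :
  is_hilbert ipL -> separable ipL -> is_conjugation ipL cj ->
  is_hilbert ipF ->
  fock_representation ipL cj ipF D a ad Om ->
  complete_orthonormal ipL e ->
  linear_on_L0 e B ->
  (forall x, npart ipF ad Om 1 x ->
     exists y, hcvg ipF (fun M => dGammaM cj a ad e B M x) y) ->
  exists K : R, forall f, inL0 e f -> hnorm ipL f = 1 -> hnorm ipL (B f) <= K.
Proof.
move=> [ipLP L_complete] _ [_ cjK _] [ipFP _] fockP [e_orthonormal _] B_linear dG_cvg.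
apply: (bounded_of_cauchy_eproj ipLP L_complete e_orthonormal B_linear) => f.
apply: (hcauchy_dGammaM_ad_vac ipLP ipFP cjK fockP e_orthonormal B_linear).
by apply: dG_cvg; apply: npart1_ad_vac.
Qed.
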